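(* For every instance such that $|S_2|=2$ and $\pi_1+\pi_3+\pi_4-1=1$, we have $H^{PW''}\le \tfrac{360}{193}H^*$.
   Context: An instance consists of an integer $n\ge 1$ and growth rates $1=h(1)\ge h(2)\ge\cdots\ge h(n)>0$ of bamboos $b_1,\dots,b_n$. Bamboo Garden Trimming (discrete version): - All heights are $0$ initially. - On each day $t=1,2,\dots$ every bamboo $b_j$ grows by $h(j)$. - At the end of each day the gardener cuts exactly one bamboo $\sigma(t)\in\{1,\dots,n\}$ back to height $0$. The height of a schedule $\sigma:\mathbb{N}\to\{1,\dots,n\}$ is the supremum, over all days $t$ and all $j$, of the height of $b_j$ at the end of day $t$ just before the cut. $H^*$ denotes the infimum of this height over all schedules. Value of algorithm PW'': - Split $\{1,\dots,n\}$ into four sets: - $S_1=\{j: \tfrac23<h(j)\le 1\}$; - $S_2=\{j:\tfrac12<h(j)\le\tfrac23\}$; - $S_3=\{j: h(j)\le\tfrac12 \text{ and } \tfrac23 2^{-k}<h(j)\le 2^{-k}\text{ for some integer }k\ge1\}$; - $S_4=\{j: h(j)\le\tfrac12\text{ and } 2^{-(k+1)}<h(j)\le \tfrac23 2^{-k}\text{ for some integer }k\ge 1\}$. - Modified growths: $h''(j)=2^{-k}$ for $j\in S_3$ and $h''(j)=\tfrac23 2^{-k}$ for $j\in S_4$, with $k$ as in the definition of the set. - Let $\pi_1=|S_1|$, $sh_3=\sum_{j\in S_3}h''(j)$, $sh_4=\sum_{j\in S_4}h''(j)$, $\pi_3=\lfloor sh_3\rfloor$, $\pi_4=\lfloor sh_4\rfloor$,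 $f_3=sh_3-\pi_3$, $f_4=sh_4-\pi_4$. - Option (a): $\pi_R(a)=\lceil f_3+f_4\rceil$ and $z(a)=\pi_1+|S_2|+\pi_3+\pi_4+\pi_R(a)$. - Option (b): if $S_2=\emptyset$ put $z(b)=+\infty$. Otherwise let $h^*=\max_{j\in S_2}h(j)$ and $f_2=\tfrac12$ if $|S_2|$ is odd, $f_2=0$ if $|S_2|$ is even. Then $\pi_R(b)=\lceil f_2+f_3+f_4\rceil$ and $z(b)=2h^*\,(\pi_1+\lfloor |S_2|/2\rfloor+\pi_3+\pi_4+\pi_R(b))$. - The value returned by algorithm PW'' is $H^{PW''}=\min\{z(a),z(b)\}$. The paper takes this as the maximum height of the periodic pinwheel trimming schedule that it builds from these partitions. *)

From Stdlib Require Import Reals Lra Lia ZArith Arith List.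
Open Scope R_scope.

(* Growth rates are h : nat -> R, bamboo b_j has rate h j for 1 <= j <= n. *)
Definition valid_instance (n : nat) (h : nat -> R) : Prop :=
  (1 <= n)%nat /\ h 1%nat = 1 /\
  (forall j : nat, (1 <= j)%nat -> (j < n)%nat -> h (S j) <= h j) /\
  0 < h n.

(* A schedule: sigma t is the bamboo cut at the end of day t (t >= 1). *)
Definition valid_schedule (n : nat) (sigma : nat -> nat) : Prop :=
  forall t : nat, (1 <= t)%nat -> (1 <= sigma t)%nat /\ (sigma t <= n)%nat.

(* Height of b_j at the end of day t, after the cut of day t (day 0 = start). *)
Fixpoint height_after (h : nat -> R) (sigma : nat -> nat) (j t : nat) : R :=
  match t with
  | O => 0
  | S t' => if Nat.eqb (sigma (S t')) j then 0
            else height_after h sigma j t' + h j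
  end.

(* Height of b_j at the end of day t (t >= 1), just before the cut. *)
Definition height_before (h : nat -> R) (sigma : nat -> nat) (j t : nat) : R :=
  height_after h sigma j (Nat.pred t) + h j.

Definition schedule_bounded_by (n : nat) (h : nat -> R) (sigma : nat -> nat)
  (B : R) : Prop :=
  forall t j : nat, (1 <= t)%nat -> (1 <= j)%nat -> (j <= n)%nat ->
    height_before h sigma j t <= B.

Definition rleb (x y : R) : bool := if Rle_dec x y then true else false.
Definition rltb (x y : R) : bool := if Rlt_dec x y then true else false.

(* floor and ceiling (Int_part x = up x - 1 is the floor of x) *)
Definition floorZ (x : R) : Z := Int_part x.
Definition ceilZ (x : R) : Z := (- Int_part (- x))%Z.

Definition p2 (k : nat) : R := / 2 ^ k.

(* For 0 < x, kk x is the unique integer k with 2^{-(k+1)} < x <= 2^{-k},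
   i.e. k = floor(-log_2 x). *)
Definition kk (x : R) : nat := Z.to_nat (Int_part (- ln x / ln 2)).

Definition inS1 (x : R) : bool := rltb (2/3) x && rleb x 1.
Definition inS2 (x : R) : bool := rltb (1/2) x && rleb x (2/3).
Definition inS3 (x : R) : bool :=
  rleb x (1/2) && rltb (2/3 * p2 (kk x)) x && rleb x (p2 (kk x)).
Definition inS4 (x : R) : bool :=
  rleb x (1/2) && rltb (p2 (S (kk x))) x && rleb x (2/3 * p2 (kk x)).

Definition h3 (x : R) : R := p2 (kk x).
Definition h4 (x : R) : R := 2/3 * p2 (kk x).

Definition idx (n : nat) : list nat := seq 1 n.
Definition setS (n : nat) (h : nat -> R) (P : R -> bool) : list nat :=
  filter (fun j => P (h j)) (idx n).
Definition sumR (l : list nat) (f : nat -> R) : R := fold_right Rplus 0 (map f l).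

Definition pi1 n h : nat := length (setS n h inS1).
Definition card2 n h : nat := length (setS n h inS2).
Definition sh3 n h : R := sumR (setS n h inS3) (fun j => h3 (h j)).
Definition sh4 n h : R := sumR (setS n h inS4) (fun j => h4 (h j)).
Definition pi3 n h : Z := floorZ (sh3 n h).
Definition pi4 n h : Z := floorZ (sh4 n h).
Definition f3 n h : R := sh3 n h - IZR (pi3 n h).
Definition f4 n h : R := sh4 n h - IZR (pi4 n h).

Definition z_a n h : R :=
  INR (pi1 n h) + INR (card2 n h) + IZR (pi3 n h) + IZR (pi4 n h)
  + IZR (ceilZ (f3 n h + f4 n h)).

(* h* = max of h over S_2 (only used when S_2 is nonempty; rates are > 0) *)
Definition hstar n h : R := fold_right Rmax 0 (map h (setS n h inS2)).
Definition f2 n h : R := if Nat.odd (card2 n h) then 1/2 else 0.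

Definition z_b n h : R :=
  2 * hstar n h *
  (INR (pi1 n h) + INR (Nat.div (card2 n h) 2) + IZR (pi3 n h) + IZR (pi4 n h)
   + IZR (ceilZ (f2 n h + f3 n h + f4 n h))).

(* H^{PW''} = min{z(a), z(b)}, with z(b) = +infinity when S_2 is empty *)
Definition H_PW (n : nat) (h : nat -> R) : R :=
  match setS n h inS2 with
  | nil => z_a n h
  | _ => Rmin (z_a n h) (z_b n h)
  end.

(* A schedule of height B has B >= sum_j h(j): the total height grows by
   sum_j h(j) every day, loses at most B at each cut and never exceeds n B.
   Since h >= 2/3 on S_1, h >= 2/3 h'' on S_3 and S_4, and b_1 (rate 1) pays
   1/3 more than its share in S_1, with S_2 = {a, b} and f = f_3 + f_4 we get
     B >= 2/3 (pi_1 + sh_3 + sh_4) + 1/3 + h(a) + h(b) >= 13/6 + h^* + 2/3 f,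
   and a case analysis on ceil f bounds
   min(z(a), z(b)) = min(4 + ceil f, 2 h^* (3 + ceil f)) by 360/193 of that. *)
From Stdlib Require Import Reals ZArith List Lra Lia.
Open Scope R_scope.

Lemma sumR_cons a l f : sumR (a :: l) f = f a + sumR l f.
Proof. reflexivity. Qed.

Lemma sumR_le l f g : (forall j, In j l -> f j <= g j) -> sumR l f <= sumR l g.
Proof.
  unfold sumR; induction l as [|a l IH]; intros Hfg; simpl; [lra|].
  assert (f a <= g a) by (apply Hfg; left; reflexivity).
  assert (fold_right Rplus 0 (map f l) <= fold_right Rplus 0 (map g l))
    by (apply IH; intros; apply Hfg; right; assumption).
  lra.
Qed.

Lemma sumR_ext l f g : (forall j, In j l -> f j = g j) -> sumR l f = sumR l g.
Proof.
  intros Hfg; apply Rle_antisym; apply sumR_le; intros j Hj; rewrite Hfg; auto; lra.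
Qed.

Lemma sumR_plus l f g : sumR l (fun j => f j + g j) = sumR l f + sumR l g.
Proof. unfold sumR; induction l as [|a l IH]; simpl; [|rewrite IH]; lra. Qed.

Lemma sumR_scale l c f : sumR l (fun j => c * f j) = c * sumR l f.
Proof. unfold sumR; induction l as [|a l IH]; simpl; [|rewrite IH]; lra. Qed.

Lemma sumR_const l c : sumR l (fun _ => c) = c * INR (length l).
Proof.
  unfold sumR; induction l as [|a l IH]; simpl; [lra|].
  rewrite IH; destruct (length l); simpl; lra.
Qed.

Lemma sumR_filter (P : nat -> bool) l f :
  sumR (filter P l) f = sumR l (fun j => if P j then f j else 0).
Proof.
  unfold sumR; induction l as [|a l IH]; simpl; [reflexivity|].
  destruct (P a); simpl; rewrite IH; lra.
Qed.

Lemma sumR_indicator s l g : NoDup l -> In s l ->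
  sumR l (fun j => if Nat.eqb s j then g j else 0) = g s.
Proof.
  induction l as [|a l IH]; intros Hnd Hs; [destruct Hs|].
  inversion Hnd as [|? ? Ha Hnd']; subst.
  rewrite sumR_cons; destruct Hs as [->|Hs].
  - rewrite Nat.eqb_refl.
    rewrite (sumR_ext l _ (fun _ => 0)), sumR_const; [lra|].
    intros j Hj; destruct (Nat.eqb_spec s j); [subst; contradiction|reflexivity].
  - destruct (Nat.eqb_spec s a); [subst; contradiction|].
    rewrite IH by assumption; lra.
Qed.

Lemma sumR_remove s l g : NoDup l -> In s l ->
  sumR l (fun j => if Nat.eqb s j then 0 else g j) = sumR l g - g s.
Proof.
  intros Hnd Hs.
  rewrite <- (sumR_indicator s l g Hnd Hs).
  rewrite (sumR_ext l g (fun j => (if Nat.eqb s j then 0 else g j)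
                                 + (if Nat.eqb s j then g j else 0))).
  - rewrite sumR_plus; lra.
  - intros j _; destruct (Nat.eqb s j); lra.
Qed.

Lemma In_idx n j : In j (idx n) <-> (1 <= j)%nat /\ (j <= n)%nat.
Proof. unfold idx; rewrite in_seq; lia. Qed.

Definition total_height (n : nat) (h : nat -> R) (sigma : nat -> nat) (t : nat) : R :=
  sumR (idx n) (fun j => height_after h sigma j t).

Section ScheduleLowerBound.

Variables (n : nat) (h : nat -> R) (sigma : nat -> nat) (B : R).
Hypothesis sigma_valid : valid_schedule n sigma.
Hypothesis sigma_bounded : schedule_bounded_by n h sigma B.

Lemma total_height_step t :
  total_height n h sigma t + sumR (idx n) h - B <= total_height n h sigma (S t).
Proof.
  destruct (sigma_valid (S t)) as [Hs1 Hsn]; [lia|].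
  unfold total_height; cbn [height_after].
  rewrite sumR_remove by (apply seq_NoDup || (apply In_idx; split; assumption)).
  rewrite sumR_plus.
  pose proof (sigma_bounded (S t) (sigma (S t)) ltac:(lia) Hs1 Hsn) as Hcut.
  unfold height_before in Hcut; simpl in Hcut; lra.
Qed.

Lemma total_height_le (h_nonneg : forall j, (1 <= j)%nat -> (j <= n)%nat -> 0 <= h j) t :
  total_height n h sigma t <= INR n * B.
Proof.
  unfold total_height.
  replace (INR n) with (INR (length (idx n))) by (unfold idx; rewrite length_seq; reflexivity).
  rewrite Rmult_comm, <- sumR_const; apply sumR_le.
  intros j Hj; apply In_idx in Hj as [Hj1 Hjn].
  pose proof (sigma_bounded (S t) j ltac:(lia) Hj1 Hjn) as Hj.
  pose proof (h_nonneg j Hj1 Hjn).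
  unfold height_before in Hj; simpl in Hj; lra.
Qed.

Lemma sum_rates_le_schedule_bound :
  (forall j, (1 <= j)%nat -> (j <= n)%nat -> 0 <= h j) -> sumR (idx n) h <= B.
Proof.
  intros h_nonneg.
  set (gain := sumR (idx n) h - B).
  assert (Hgrowth : forall t, INR t * gain <= total_height n h sigma t).
  { induction t as [|t IH].
    - unfold total_height; simpl; rewrite sumR_const; lra.
    - rewrite S_INR; pose proof (total_height_step t); unfold gain in *; lra. }
  destruct (Rle_or_lt gain 0) as [Hg|Hg]; [unfold gain in Hg; lra|].
  destruct (INR_unbounded (INR n * B / gain)) as [t Ht].
  pose proof (Hgrowth t); pose proof (total_height_le h_nonneg t).
  apply (Rmult_lt_compat_r gain) in Ht; [|assumption].
  unfold Rdiv in Ht; rewrite Rmult_assoc, Rinv_l in Ht by lra; lra.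
Qed.

End ScheduleLowerBound.

Lemma p2_pos k : 0 < p2 k.
Proof. unfold p2; apply Rinv_0_lt_compat, pow_lt; lra. Qed.

Lemma p2_S k : p2 (S k) = p2 k / 2.
Proof. unfold p2; simpl; pose proof (pow_lt 2 k ltac:(lra)); field; lra. Qed.

(* On S_4, h > 2^{-(k+1)} = 3/4 h''. *)
Lemma class_weight_le_rate (x : R) (is_b1 : bool) :
  0 < x -> (is_b1 = true -> x = 1) ->
  (if inS1 x then 2/3 else 0) + (if is_b1 then 1/3 else 0)
  + (if inS2 x then x else 0) + (if inS3 x then 2/3 * h3 x else 0)
  + (if inS4 x then 2/3 * h4 x else 0) <= x.
Proof.
  intros Hx Hb1.
  unfold inS1, inS2, inS3, inS4, h3, h4, rltb, rleb.
  rewrite p2_S; pose proof (p2_pos (kk x)); set (p := p2 (kk x)) in *.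
  destruct is_b1; [rewrite (Hb1 eq_refl)|];
  repeat match goal with |- context [Rlt_dec ?a ?b] => destruct (Rlt_dec a b) end;
  repeat match goal with |- context [Rle_dec ?a ?b] => destruct (Rle_dec a b) end;
  simpl; lra.
Qed.

Lemma valid_instance_rates_pos n h : valid_instance n h ->
  forall j, (1 <= j)%nat -> (j <= n)%nat -> 0 < h j.
Proof.
  intros [_ [_ [Hmono Hn]]].
  assert (Hdown : forall d j, (1 <= j)%nat -> (j + d = n)%nat -> h n <= h j).
  { induction d as [|d IH]; intros j Hj Hjd.
    - replace j with n by lia; lra.
    - pose proof (Hmono j Hj ltac:(lia)); pose proof (IH (S j) ltac:(lia) ltac:(lia)); lra. }
  intros j Hj Hjn; pose proof (Hdown (n - j)%nat j Hj ltac:(lia)); lra.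
Qed.

Lemma sum_rates_ge_class_weights n h : valid_instance n h ->
  2/3 * (INR (pi1 n h) + sh3 n h + sh4 n h) + 1/3 + sumR (setS n h inS2) h
  <= sumR (idx n) h.
Proof.
  intros Hv; pose proof (valid_instance_rates_pos n h Hv) as Hpos.
  destruct Hv as [Hn [H1 _]].
  assert (Hweights := sumR_le (idx n) (fun j =>
        (if inS1 (h j) then 2/3 else 0) + (if Nat.eqb 1 j then 1/3 else 0)
        + (if inS2 (h j) then h j else 0) + (if inS3 (h j) then 2/3 * h3 (h j) else 0)
        + (if inS4 (h j) then 2/3 * h4 (h j) else 0)) h).
  rewrite !sumR_plus in Hweights.
  rewrite sumR_indicator in Hweights by (apply seq_NoDup || (apply In_idx; lia)).
  unfold pi1, sh3, sh4, setS.
  rewrite !Rmult_plus_distr_l, <- sumR_const, <- !sumR_scale, !sumR_filter.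
  eapply Rle_trans; [|apply Hweights]; [lra|].
  intros j Hj; apply In_idx in Hj.
  apply class_weight_le_rate; [apply Hpos; lia|].
  intros E; apply Nat.eqb_eq in E; subst; assumption.
Qed.

Lemma floorZ_bounds x : IZR (floorZ x) <= x < IZR (floorZ x) + 1.
Proof. unfold floorZ; destruct (base_Int_part x); lra. Qed.

Lemma ceilZ_bounds x : x <= IZR (ceilZ x) < x + 1.
Proof. unfold ceilZ; rewrite opp_IZR; destruct (base_Int_part (- x)); lra. Qed.

Lemma inS2_bounds x : inS2 x = true -> 1/2 < x <= 2/3.
Proof.
  unfold inS2, rltb, rleb.
  destruct (Rlt_dec (1/2) x), (Rle_dec x (2/3)); simpl; intros; first [lra | discriminate].
Qed.

Lemma hstar_pair n h a b : setS n h inS2 = a :: b :: nil ->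
  1/2 < hstar n h <= 2/3 /\ hstar n h + 1/2 < h a + h b.
Proof.
  intros E.
  assert (Hmem : forall j, In j (setS n h inS2) -> 1/2 < h j <= 2/3)
    by (intros j Hj; apply filter_In in Hj; apply inS2_bounds; tauto).
  pose proof (Hmem a ltac:(rewrite E; left; reflexivity)).
  pose proof (Hmem b ltac:(rewrite E; right; left; reflexivity)).
  unfold hstar; rewrite E; simpl; unfold Rmax; repeat destruct Rle_dec; lra.
Qed.

Lemma H_PW_pair n h a b : setS n h inS2 = a :: b :: nil ->
  let c := IZR (ceilZ (f3 n h + f4 n h)) in
  let N := INR (pi1 n h) + IZR (pi3 n h) + IZR (pi4 n h) in
  H_PW n h = Rmin (N + 2 + c) (2 * hstar n h * (N + 1 + c)).
Proof.
  intros E c N; unfold H_PW, z_a, z_b, f2, card2; rewrite E; simpl.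
  rewrite Rplus_0_l; fold c; unfold N; f_equal; [|f_equal]; lra.
Qed.

(* Option (b) is only needed for c = 1 and c = 2.  The constant is not tight:
   the ratio stays below 120/67, approached as f -> 0 with c = 1, hs = 5/8. *)
Lemma pw_options_le (hs f : R) (c : Z) :
  1/2 < hs <= 2/3 -> 0 <= f -> f <= IZR c < f + 1 ->
  Rmin (4 + IZR c) (2 * hs * (3 + IZR c)) <= 360/193 * (13/6 + hs + 2/3 * f).
Proof.
  intros Hhs Hf Hc.
  pose proof (Rmin_l (4 + IZR c) (2 * hs * (3 + IZR c))).
  pose proof (Rmin_r (4 + IZR c) (2 * hs * (3 + IZR c))).
  assert (Hc0 : (0 <= c)%Z) by (apply le_IZR; lra).
  destruct (Z_le_gt_dec c 2) as [Hc2|Hc2].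
  - assert (c = 0 \/ c = 1 \/ c = 2)%Z as [E|[E|E]] by lia; subst c; simpl in *; lra.
  - apply Z.gt_lt, Z.le_succ_l, IZR_le in Hc2; simpl in Hc2; lra.
Qed.

Theorem proposition5 (n : nat) (h : nat -> R) :
  valid_instance n h ->
  card2 n h = 2%nat ->
  (Z.of_nat (pi1 n h) + pi3 n h + pi4 n h - 1 = 1)%Z ->
  forall (sigma : nat -> nat) (B : R),
    valid_schedule n sigma ->
    schedule_bounded_by n h sigma B ->
    H_PW n h <= 360 / 193 * B.
Proof.
  intros Hv Hcard Hpi sigma B Hsigma Hbounded.
  pose proof (sum_rates_le_schedule_bound n h sigma B Hsigma Hbounded
    ltac:(intros j Hj1 Hjn; apply Rlt_le, (valid_instance_rates_pos n h Hv); assumption)).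
  pose proof (sum_rates_ge_class_weights n h Hv).
  unfold card2 in Hcard.
  destruct (setS n h inS2) as [|a [|b [|? ?]]] eqn:ES2; try discriminate.
  destruct (hstar_pair n h a b ES2) as [Hhs Hab].
  assert (Hsum2 : sumR (a :: b :: nil) h = h a + h b) by (unfold sumR; simpl; lra).
  assert (HN : INR (pi1 n h) + IZR (pi3 n h) + IZR (pi4 n h) = 2).
  { rewrite INR_IZR_INZ, <- !plus_IZR; f_equal; lia. }
  pose proof (floorZ_bounds (sh3 n h)); pose proof (floorZ_bounds (sh4 n h)).
  pose proof (ceilZ_bounds (f3 n h + f4 n h)).
  rewrite (H_PW_pair n h a b ES2); cbv zeta; rewrite HN.
  replace (2 + 2) with 4 by lra; replace (2 + 1) with 3 by lra.
  eapply Rle_trans; [apply pw_options_le with (f := f3 n h + f4 n h)|];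
    unfold f3, f4, pi3, pi4 in *; lra.
Qed.
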